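(* Let $S^{-\mathbf T}$ be the signature $S$ with the predicate symbol $\mathbf T$ removed. Let $H^{-\mathbf T}$ be a coherent (i.e. satisfiable) theory over $S^{-\mathbf T}$, and let $H$ be $H^{-\mathbf T}$ together with all instances of the schema $\mathbf T(\mu(\varphi))\leftrightarrow\varphi$ for $\varphi\in\mathcal L_q$. Then $H$ is coherent.
   Context: Let $S_b=(F_b,P_b,V_\infty,\delta_b)$ be a first-order signature ($F_b$ function symbols, constants being $0$-ary functions; $P_b$ predicate symbols; $V_\infty$ an infinite set of variables; $\delta_b$ the arities). Formulas are built from atoms with $\neg,\wedge,\forall$. Fix a finite set $V\subseteq V_\infty$ of ''quotable variables''. The augmented signature $S$ has predicate symbols $P=P_b\sqcup\{\mathbf{T}\}$ ($\mathbf{T}$ unary) and function symbols $F=F_b\sqcup\underline{F}\sqcup\underline{P}\sqcup\underline{V}\sqcup\{\underline{\wedge},\underline{\neg},\underline{\forall},\mathrm{quote}\}$, where $\underline{F}=\{\underline{f}:f\in F_b\}$ ($\underline f$ has the arity of $f$), $\underline{P}=\{\underline{p}:p\in P\}$ ($\underline p$ is a function symbol with the arity of $p$), $\underline{V}=\{\underline{x}:x\in V\}$ (constants), $\underline\wedge,\underline\forall$ binary, $\underline\neg,\mathrm{quote}$ unary; all new symbols are fresh. The set $\mathcal{Q}$ is the least set of terms containing each $\underline x\in\underline V$ and closed under forming $\underline f(t_1,\dots,t_n)$ ($\underline f\in\underline F$), $\underline p(t_1,\dots,t_n)$ ($\underline p\in\underline P$), $\underline\wedge(t_1,t_2)$,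 $\underline\neg(t)$, $\underline\forall(\underline x,t)$ ($\underline x\in\underline V$), $\mathrm{quote}(t)$, for $t,t_i\in\mathcal{Q}$. The sets $\mathcal{T}_q$, $\mathcal{L}_q$ and the map $\mu$ are defined by simultaneous induction: $\mathcal T_q$ contains every variable $x\in V$, every $f(t_1,\dots,t_n)$ with $f\in F_b$, $t_i\in\mathcal T_q$, and every term $\mu(e)$ with $e\in\mathcal T_q\cup\mathcal L_q$; $\mathcal L_q$ contains $p(t_1,\dots,t_n)$ with $p\in P_b$, $t_i\in\mathcal T_q$, and $\forall x.\varphi$ ($x\in V$), $\neg\varphi$, $\varphi_1\wedge\varphi_2$ for $\varphi,\varphi_i\in\mathcal L_q$ (so formulas of $\mathcal L_q$ never contain $\mathbf T$). The quotation map: $\mu(f(t_1,\dots,t_n))=\underline f(\mu(t_1),\dots,\mu(t_n))$ for $f\in F_b$; $\mu(t_q)=\mathrm{quote}(t_q)$ for $t_q\in\mathcal Q$; $\mu(p(t_1,\dots,t_n))=\underline p(\mu(t_1),\dots,\mu(t_n))$; $\mu(x)=\underline x$; $\mu(\varphi_1\wedge\varphi_2)=\underline\wedge(\mu(\varphi_1),\mu(\varphi_2))$; $\mu(\neg\varphi)=\underline\neg(\mu(\varphi))$; $\mu(\forall x.\varphi)=\underline\forall(\underline x,\mu(\varphi))$. A theory is coherent if it has a model. *)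

From mathcomp Require Import all_boot.


Unset Printing Implicit Defensive.

Section Syntax.
Variables (F : Type) (arF : F -> nat).

Inductive term : Type :=
  | Var (x : nat)
  | App (f : F) (args : 'I_(arF f) -> term).

Variables (P : Type) (arP : P -> nat).

Inductive formula : Type :=
  | Atom (p : P) (args : 'I_(arP p) -> term)
  | Neg (phi : formula)
  | And (phi psi : formula)
  | Forall (x : nat) (phi : formula).

Definition Iff (phi psi : formula) : formula :=
  And (Neg (And phi (Neg psi))) (Neg (And psi (Neg phi))).

Record structure : Type := Structure {
  dom : Type;
  fint : forall f : F, ('I_(arF f) -> dom) -> dom;
  pint : forall p : P, ('I_(arP p) -> dom) -> Prop }.

Definition update (M : structure) (env : nat -> dom M) (x : nat) (d : dom M)
  : nat -> dom M := fun y => if y == x then d else env y.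

Fixpoint eval (M : structure) (env : nat -> dom M) (t : term) : dom M :=
  match t with
  | Var x => env x
  | App f args => fint M f (fun i => eval M env (args i))
  end.

Fixpoint sat (M : structure) (env : nat -> dom M) (phi : formula) : Prop :=
  match phi with
  | Atom p args => pint M p (fun i => eval M env (args i))
  | Neg phi => ~ sat M env phi
  | And phi psi => sat M env phi /\ sat M env psi
  | Forall x phi => forall d : dom M, sat M (update M env x d) phi
  end.

Definition coherent (Th : formula -> Prop) : Prop :=
  exists (M : structure) (env : nat -> dom M),
    forall phi, Th phi -> sat M env phi.

End Syntax.

Arguments Var {F arF} x.
Arguments App {F arF} f args.
Arguments Atom {F arF P arP} p args.
Arguments Neg {F arF P arP} phi.
Arguments And {F arF P arP} phi psi.
Arguments Forall {F arF P arP} x phi.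
Arguments Iff {F arF P arP} phi psi.
Arguments sat {F arF P arP} M env phi.
Arguments eval {F arF P arP} M env t.
Arguments coherent {F arF P arP} Th.

Section Map.
Variables (F : Type) (arF : F -> nat) (P P' : Type) (arP : P -> nat)
  (arP' : P' -> nat) (g : P -> P') (hg : forall p, arP' (g p) = arP p).

Fixpoint fmap_preds (phi : formula F arF P arP) : formula F arF P' arP' :=
  match phi with
  | Atom p args => Atom (g p) (fun i => args (cast_ord (hg p) i))
  | Neg phi => Neg (fmap_preds phi)
  | And phi psi => And (fmap_preds phi) (fmap_preds psi)
  | Forall x phi => Forall x (fmap_preds phi)
  end.
End Map.

Record base_sig : Type := BaseSig {
  Fb : Type;            (* function symbols (constants are 0-ary) *)
  Pb : Type;
  arFb : Fb -> nat;
  arPb : Pb -> nat }.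
Arguments arFb {b} f.
Arguments arPb {b} p.

Section Augmented.
Variables (Sb : base_sig) (V : seq nat). (* V : finite set of quotable variables *)

Inductive aP : Type :=
  | bP (p : Pb Sb)
  | PT.

Definition arP (p : aP) : nat :=
  match p with bP p => arPb p | PT => 1 end.

Inductive aF : Type :=
  | bF (f : Fb Sb)
  | uF (f : Fb Sb)
  | uP (p : aP)
  | uV (x : {x : nat | x \in V})
  | uAnd | uNeg | uForall | quote.

Definition arF (f : aF) : nat :=
  match f with
  | bF f => arFb f
  | uF f => arFb f
  | uP p => arP p
  | uV _ => 0
  | uAnd => 2
  | uNeg => 1
  | uForall => 2
  | quote => 1
  end.

Definition aterm := term aF arF.
Definition aformula := formula aF arF aP arP.
Definition bformula := formula aF arF (Pb Sb) (@arPb Sb).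

Definition args0 (i : 'I_0) : aterm := False_rect _ (notF (ltn_ord i)).
Definition args1 (t : aterm) : 'I_1 -> aterm := fun _ => t.
Definition args2 (t u : aterm) : 'I_2 -> aterm :=
  fun i => if val i == 0 then t else u.

Definition uvar (x : nat) (hx : x \in V) : aterm := App (uV (exist _ x hx)) args0.

(* T_q, L_q and the quotation map mu, by simultaneous induction:
   muT t q  <->  t \in T_q and mu(t) = q
   muF phi q <-> phi \in L_q and mu(phi) = q.
   The clause for t_q \in Q (mu(t_q) = quote(t_q)) is stated for the terms
   t_q of T_q lying in Q, which are exactly the terms mu(e). *)
Inductive muT : aterm -> aterm -> Prop :=
  | muT_var (x : nat) (hx : x \in V) : muT (Var x) (uvar x hx)
  | muT_app (f : Fb Sb) (args qargs : 'I_(arFb f) -> aterm) :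
      (forall i, muT (args i) (qargs i)) ->
      muT (App (bF f) args) (App (uF f) qargs)
  | muT_quoteT (t q : aterm) : muT t q -> muT q (App quote (args1 q))
  | muT_quoteF (phi : bformula) (q : aterm) : muF phi q -> muT q (App quote (args1 q))
with muF : bformula -> aterm -> Prop :=
  | muF_atom (p : Pb Sb) (args qargs : 'I_(arPb p) -> aterm) :
      (forall i, muT (args i) (qargs i)) ->
      muF (Atom p args) (App (uP (bP p)) qargs)
  | muF_neg (phi : bformula) (q : aterm) :
      muF phi q -> muF (Neg phi) (App uNeg (args1 q))
  | muF_and (phi psi : bformula) (q r : aterm) :
      muF phi q -> muF psi r -> muF (And phi psi) (App uAnd (args2 q r))
  | muF_forall (x : nat) (hx : x \in V) (phi : bformula) (q : aterm) :
      muF phi q -> muF (Forall x phi) (App uForall (args2 (uvar x hx) q)).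

Definition embed (phi : bformula) : aformula :=
  @fmap_preds aF arF (Pb Sb) aP (@arPb Sb) arP bP (fun _ => erefl) phi.

Definition H_of (HmT : bformula -> Prop) : aformula -> Prop :=
  fun chi =>
    (exists psi, HmT psi /\ chi = embed psi) \/
    (exists (phi : bformula) (q : aterm),
        muF phi q /\ chi = Iff (Atom (PT : aP) (args1 q)) (embed phi)).

End Augmented.

(* Enrich every element of a model M of H^{-T} with a "meaning": the function
   of the valuation denoted by the quoted term or formula it stands for.  The
   quotation symbols compute meanings compositionally, [quote t] means the
   constant value of [t] (quotations are ground, so this value does not depend
   on the valuation), and [T a] holds when the meaning of [a] is a formula true
   at the given valuation.  Projecting onto M is a surjective homomorphism, so
   H^{-T} stays true, and induction along mu shows that mu(phi) means phi. *)
From mathcomp Require Import all_boot.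
From Stdlib Require Import FunctionalExtensionality Setoid.

Section Ground.
Variables (F : Type) (arF : F -> nat) (P : Type) (arP : P -> nat).

Fixpoint ground (t : term F arF) : Prop :=
  match t with
  | Var _ => False
  | App f args => forall i, ground (args i)
  end.

Lemma eval_ground (M : structure F arF P arP) (e1 e2 : nat -> dom _ _ _ _ M)
    (t : term F arF) :
  ground t -> eval M e1 t = eval M e2 t.
Proof.
elim: t => [//|f args IH] /= gr_args; congr (fint _ _ _ _ M f).
by apply: functional_extensionality => i; apply: IH.
Qed.

End Ground.
Arguments ground {F arF} t.

Section SurjectiveHomomorphism.
Variables (F : Type) (arF : F -> nat) (P P' : Type) (arP : P -> nat)
  (arP' : P' -> nat) (g : P -> P') (hg : forall p, arP' (g p) = arP p).
Variables (M : structure F arF P arP) (N : structure F arF P' arP').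
Variables (h : dom _ _ _ _ N -> dom _ _ _ _ M) (s : dom _ _ _ _ M -> dom _ _ _ _ N).
Hypothesis hsK : cancel s h.
Hypothesis h_fint : forall f a, h (fint _ _ _ _ N f a) = fint _ _ _ _ M f (h \o a).
Hypothesis h_pint : forall p (a : 'I_(arP p) -> dom _ _ _ _ N),
  pint _ _ _ _ N (g p) (fun i => a (cast_ord (hg p) i)) <-> pint _ _ _ _ M p (h \o a).

Lemma eval_hom (e : nat -> dom _ _ _ _ N) (t : term F arF) :
  h (eval N e t) = eval M (h \o e) t.
Proof.
elim: t => [//|f args IH] /=; rewrite h_fint; congr (fint _ _ _ _ M f).
by apply: functional_extensionality => i; apply: IH.
Qed.

Lemma hom_update (e : nat -> dom _ _ _ _ N) x d :
  h \o update _ _ _ _ N e x d = update _ _ _ _ M (h \o e) x (h d).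
Proof. by apply: functional_extensionality => y; rewrite /update /=; case: (y == x). Qed.

Lemma sat_fmap_preds_hom (phi : formula F arF P arP) (e : nat -> dom _ _ _ _ N) :
  sat N e (fmap_preds _ _ _ _ _ _ g hg phi) <-> sat M (h \o e) phi.
Proof.
elim: phi e => [p args|phi IH|phi IH psi IH'|x phi IH] e /=.
- apply: iff_trans (h_pint _ (fun i => eval N e (args i))) _.
  have -> : h \o (fun i => eval N e (args i)) = (fun i => eval M (h \o e) (args i)).
    by apply: functional_extensionality => i; apply: eval_hom.
  exact: iff_refl.
- by rewrite IH.
- by rewrite IH IH'.
- split=> sat_phi d.
  + by rewrite -(hsK d) -hom_update -IH.
  + by rewrite IH hom_update.
Qed.

End SurjectiveHomomorphism.

Lemma sat_Iff (F : Type) (arF : F -> nat) (P : Type) (arP : P -> nat)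
    (M : structure F arF P arP) e (phi psi : formula F arF P arP) :
  (sat M e phi <-> sat M e psi) -> sat M e (Iff phi psi).
Proof. by move=> /=; tauto. Qed.

Scheme muT_mind := Minimality for muT Sort Prop
  with muF_mind := Minimality for muF Sort Prop.
Combined Scheme mu_mind from muT_mind, muF_mind.

Lemma ground_mu (Sb : base_sig) (V : seq nat) :
  (forall t q, muT Sb V t q -> ground q) /\
  (forall phi q, muF Sb V phi q -> ground q).
Proof.
apply: (mu_mind Sb V (fun _ q => ground q) (fun _ q => ground q)) => //=.
- by move=> x hx [].
- by move=> phi psi q r _ gr_q _ gr_r i; rewrite /args2; case: (val i == 0).
- by move=> x hx phi q _ gr_q i; rewrite /args2; case: (val i == 0) => // -[].
Qed.

Section QuotationModel.
Variables (Sb : base_sig) (V : seq nat).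
Variables (M : structure (aF Sb V) (arF Sb V) (Pb Sb) (@arPb Sb))
  (env : nat -> dom _ _ _ _ M).

Let D := dom _ _ _ _ M.

(* Only the field matching the kind of object quoted is relevant; the other
   fields hold junk. *)
Record meaning := Meaning {
  mterm : (nat -> D) -> D;
  mform : (nat -> D) -> Prop;
  mvar : nat }.

Definition no_meaning : meaning := Meaning (fun e => e 0) (fun _ => True) 0.

Definition meaning_of (f : aF Sb V) : ('I_(arF Sb V f) -> D * meaning) -> meaning :=
  match f as f0 return ('I_(arF Sb V f0) -> D * meaning) -> meaning with
  | bF _ => fun _ => no_meaning
  | uF f => fun a =>
      Meaning (fun e => fint _ _ _ _ M (bF Sb V f) (fun i => mterm (a i).2 e))
        (fun _ => True) 0
  | uP (bP p) => fun a =>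
      Meaning (fun e => e 0) (fun e => pint _ _ _ _ M p (fun i => mterm (a i).2 e)) 0
  | uP PT => fun _ => no_meaning
  | uV x => fun _ => Meaning (fun e => e (sval x)) (fun _ => True) (sval x)
  | uAnd => fun a =>
      Meaning (fun e => e 0) (fun e => mform (a ord0).2 e /\ mform (a ord_max).2 e) 0
  | uNeg => fun a => Meaning (fun e => e 0) (fun e => ~ mform (a ord0).2 e) 0
  | uForall => fun a =>
      Meaning (fun e => e 0)
        (fun e => forall d, mform (a ord_max).2 (update _ _ _ _ M e (mvar (a ord0).2) d)) 0
  | quote => fun a => Meaning (fun _ => (a ord0).1) (fun _ => True) 0
  end.

Definition quote_pint (p : aP Sb) : ('I_(arP Sb p) -> D * meaning) -> Prop :=
  match p as p0 return ('I_(arP Sb p0) -> D * meaning) -> Prop with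
  | bP p => fun a => pint _ _ _ _ M p (fun i => (a i).1)
  | PT => fun a => mform (a ord0).2 env
  end.

Definition quote_model : structure (aF Sb V) (arF Sb V) (aP Sb) (arP Sb) :=
  Structure _ _ _ _ (D * meaning)
    (fun f a => (fint _ _ _ _ M f (fst \o a), meaning_of f a)) quote_pint.

Lemma sat_quote_model_embed (psi : bformula Sb V) (e : nat -> D * meaning) :
  sat quote_model e (embed Sb V psi) <-> sat M (fst \o e) psi.
Proof.
apply: (@sat_fmap_preds_hom _ _ _ _ _ _ _ _ M quote_model fst
  (fun d => (d, no_meaning))) => // p a /=.
have -> : (fun i => (a (cast_ord erefl i)).1) = fst \o a.
  by apply: functional_extensionality => i; rewrite cast_ord_id.
exact: iff_refl.
Qed.

Lemma meaning_mu (e' : nat -> D * meaning) :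
  (forall t q, muT Sb V t q ->
     forall e, mterm (eval quote_model e' q).2 e = eval M e t) /\
  (forall phi q, muF Sb V phi q ->
     forall e, mform (eval quote_model e' q).2 e <-> sat M e phi).
Proof.
have eval_fst t : (eval quote_model e' t).1 = eval M (fst \o e') t.
  exact: (@eval_hom _ _ _ _ _ _ M quote_model fst).
apply: (mu_mind Sb V
  (fun t q => forall e, mterm (eval quote_model e' q).2 e = eval M e t)
  (fun phi q => forall e, mform (eval quote_model e' q).2 e <-> sat M e phi)) => //=.
- move=> f args qargs _ IH e; congr (fint _ _ _ _ M _).
  by apply: functional_extensionality => i; apply: IH.
- by move=> t q /(proj1 (ground_mu Sb V)) gr_q _ e; rewrite eval_fst; apply: eval_ground.
- by move=> phi q /(proj2 (ground_mu Sb V)) gr_q _ e; rewrite eval_fst; apply: eval_ground.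
- move=> p args qargs _ IH e.
  have -> : (fun i => mterm (eval quote_model e' (qargs i)).2 e)
            = (fun i => eval M e (args i)).
    by apply: functional_extensionality => i; apply: IH.
  exact: iff_refl.
- by move=> phi q _ IH e; rewrite IH.
- by move=> phi psi q r _ IH _ IH' e; rewrite IH IH'.
- by move=> x hx phi q _ IH e; split=> sat_phi d; apply/IH.
Qed.

End QuotationModel.

Theorem proposition5p1 (Sb : base_sig) (V : seq nat)
    (HmT : bformula Sb V -> Prop) :
  coherent HmT -> coherent (H_of Sb V HmT).
Proof.
case=> M [env sat_HmT].
pose env' x := (env x, no_meaning Sb V M).
exists (quote_model Sb V M env), env' => chi [[psi [HmT_psi ->]] | [phi [q [mu_phi ->]]]].
- by apply/sat_quote_model_embed; apply: sat_HmT.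
- apply: sat_Iff; rewrite sat_quote_model_embed.
  exact: (proj2 (meaning_mu Sb V M env env') _ _ mu_phi env).
Qed.
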